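(* Let $\varepsilon_1>0$, $0<k<1$ and $E\ge1$. Then there exists $\varepsilon>0$ with the following property. Let $\mathcal{B}\subset\mathbb{R}^2$ be a (filled) ellipse centered at the origin, of eccentricity $\le E$ and diameter $\le\varepsilon_1$, and let $L\in\mathrm{SL}(2,\mathbb{R})$ satisfy $\|L-I\|<\varepsilon$ and $L(\mathcal{B})=\mathcal{B}$. Then there exists a $C^1$ area-preserving diffeomorphism $h:\mathbb{R}^2\to\mathbb{R}^2$ such that, with $\mathcal{B}'=\sqrt{k}\,\mathcal{B}$: (i) $z\notin\mathcal{B}\Rightarrow h(z)=z$; (ii) $z\in\mathcal{B}'\Rightarrow h(z)=L(z)$; (iii) $h$ preserves every ellipse $t\mathcal{B}$, $t>0$; (iv) $|h(z)-z|\le\varepsilon_1$ for all $z$; (v) $\|Dh_z-I\|\le\varepsilon_1$ for all $z$.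
   Context: A (filled) ellipse has eccentricity $E$ if it is the image of a disk under some $L\in\mathrm{SL}(2,\mathbb{R})$ with $\|L\|=E$; equivalently $E=\sqrt{\text{major axis}/\text{minor axis}}$. *)

From Stdlib Require Import Reals.
From Coquelicot Require Import Coquelicot.
Open Scope R_scope.

Definition pt : Type := (R * R)%type.
Definition padd (u v : pt) : pt := (fst u + fst v, snd u + snd v).
Definition psub (u v : pt) : pt := (fst u - fst v, snd u - snd v).
Definition pscale (t : R) (u : pt) : pt := (t * fst u, t * snd u).
Definition vnorm (u : pt) : R := sqrt (fst u ^ 2 + snd u ^ 2).

Record mat2 := Mat2 { m11 : R; m12 : R; m21 : R; m22 : R }.
Definition mapply (M : mat2) (u : pt) : pt :=
  (m11 M * fst u + m12 M * snd u, m21 M * fst u + m22 M * snd u).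
Definition mI : mat2 := Mat2 1 0 0 1.
Definition msub (M N : mat2) : mat2 :=
  Mat2 (m11 M - m11 N) (m12 M - m12 N) (m21 M - m21 N) (m22 M - m22 N).
Definition mdet (M : mat2) : R := m11 M * m22 M - m12 M * m21 M.

Definition opnorm (M : mat2) : R :=
  real (Lub_Rbar (fun s => exists u, vnorm u <= 1 /\ s = vnorm (mapply M u))).

Definition diameter (B : pt -> Prop) : R :=
  real (Lub_Rbar (fun s => exists x y, B x /\ B y /\ s = vnorm (psub x y))).

Definition image (f : pt -> pt) (B : pt -> Prop) : pt -> Prop :=
  fun w => exists z, B z /\ f z = w.
Definition dilate (t : R) (B : pt -> Prop) : pt -> Prop := image (pscale t) B.

(* B is a filled ellipse centred at the origin with eccentricity e:
   the image of a closed disk centred at 0 under some L0 in SL(2,R)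
   with ||L0|| = e. *)
Definition centered_ellipse_ecc (B : pt -> Prop) (e : R) : Prop :=
  exists (L0 : mat2) (r : R),
    0 < r /\ mdet L0 = 1 /\ opnorm L0 = e /\
    (forall z, B z <-> image (mapply L0) (fun w => vnorm w <= r) z).

Definition has_deriv (f : pt -> pt) (z : pt) (M : mat2) : Prop :=
  forall eps, 0 < eps -> exists delta, 0 < delta /\
    forall v, vnorm v < delta ->
      vnorm (psub (psub (f (padd z v)) (f z)) (mapply M v)) <= eps * vnorm v.

Definition mat_continuous (D : pt -> mat2) : Prop :=
  forall z eps, 0 < eps -> exists delta, 0 < delta /\
    forall w, vnorm (psub w z) < delta -> opnorm (msub (D w) (D z)) < eps.

Definition C1_with (f : pt -> pt) (D : pt -> mat2) : Prop :=
  (forall z, has_deriv f z (D z)) /\ mat_continuous D.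

Definition C1 (f : pt -> pt) : Prop := exists D, C1_with f D.

Definition C1_area_pres_diffeo (h : pt -> pt) (Dh : pt -> mat2) : Prop :=
  C1_with h Dh /\
  (exists g : pt -> pt,
     (forall z, g (h z) = z) /\ (forall w, h (g w) = w) /\ C1 g) /\
  (forall z, Rabs (mdet (Dh z)) = 1).

(* Write B = M(D_r) with M in SL(2,R), |M| <= E, D_r the disk of radius r.  Then
   P = M^-1 L M preserves D_r and has determinant 1, so it is a rotation, by a small
   angle theta when L is close to I.  Let g be the twist rotating the circle of radius
   rho by the angle theta psi(rho^2/r^2), with psi a C^1 cutoff equal to 1 on [0,k] and
   to 0 on [1,oo), and put h = M g M^-1.  The twist preserves every circle about 0 and
   its Jacobian is 1, since the radial variation of the angle only adds a shear along
   the circles; it differs from the identity by O(|theta|/(1-k)) in C^1, because psi'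
   = O(1/(1-k)) only appears multiplied by rho^2 <= r^2.  Conjugating by M costs a
   factor O(E^2), and (iv) holds since h maps B onto itself. *)

From Stdlib Require Import Reals Lra Psatz Classical.
From Coquelicot Require Import Coquelicot.
Open Scope R_scope.

Lemma Rabs_lin2_le a b x y :
  Rabs (a * x + b * y) <= Rabs a * Rabs x + Rabs b * Rabs y.
Proof. eapply Rle_trans; [apply Rabs_triang|]; rewrite !Rabs_mult; lra. Qed.

Lemma Rmult_le_of_le_div c x a : 0 < c -> x <= a / c -> c * x <= a.
Proof.
  intros Hc Hx; apply Rmult_le_compat_l with (r := c) in Hx; [|lra].
  replace (c * (a / c)) with a in Hx by (field; lra); exact Hx.
Qed.

Lemma Rmult3_le_compat a b c a' b' c' :
  0 <= a <= a' -> 0 <= b <= b' -> 0 <= c <= c' -> a * b * c <= a' * b' * c'.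
Proof. intros Ha Hb Hc; apply Rmult_le_compat; try apply Rmult_le_compat; nra. Qed.

Lemma Rmult_div_succ_le c e : 0 <= c -> 0 <= e -> c * (e / (c + 1)) <= e.
Proof.
  intros Hc He; apply Rmult_le_reg_r with (c + 1); [lra|].
  field_simplify; [nra | lra].
Qed.

Lemma Lub_Rbar_real_spec (S : R -> Prop) s0 K :
  S s0 -> (forall s, S s -> s <= K) ->
  (forall s, S s -> s <= real (Lub_Rbar S)) /\ real (Lub_Rbar S) <= K.
Proof.
  intros Hs0 HK; destruct (Lub_Rbar_correct S) as [Hub Hlub].
  assert (Hle : Rbar_le (Lub_Rbar S) K) by (apply Hlub; intros s Hs; apply HK, Hs).
  assert (Hge : Rbar_le s0 (Lub_Rbar S)) by (apply Hub, Hs0).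
  destruct (Lub_Rbar S); simpl in *; tauto.
Qed.

(** * Norms of vectors and matrices *)

Lemma vnorm_ge0 u : 0 <= vnorm u.
Proof. apply sqrt_pos. Qed.

Lemma vnorm_zero : vnorm (0, 0) = 0.
Proof. unfold vnorm; cbn [fst snd]; replace (0 ^ 2 + 0 ^ 2) with 0 by ring; apply sqrt_0. Qed.

Lemma vnorm_sqr u : vnorm u ^ 2 = fst u ^ 2 + snd u ^ 2.
Proof. apply pow2_sqrt; nra. Qed.

Lemma Rabs_fst_le_vnorm u : Rabs (fst u) <= vnorm u.
Proof.
  rewrite <- sqrt_Rsqr_abs; apply sqrt_le_1_alt; unfold Rsqr; simpl.
  pose proof (pow2_ge_0 (snd u)); simpl in *; nra.
Qed.

Lemma Rabs_snd_le_vnorm u : Rabs (snd u) <= vnorm u.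
Proof.
  rewrite <- sqrt_Rsqr_abs; apply sqrt_le_1_alt; unfold Rsqr; simpl.
  pose proof (pow2_ge_0 (fst u)); simpl in *; nra.
Qed.

Lemma vnorm_le_iff u r : 0 <= r -> vnorm u <= r <-> fst u ^ 2 + snd u ^ 2 <= r ^ 2.
Proof. intros Hr; rewrite <- vnorm_sqr; pose proof (vnorm_ge0 u); split; intros; nra. Qed.

Lemma vnorm_scale t u : vnorm (pscale t u) = Rabs t * vnorm u.
Proof.
  unfold vnorm, pscale; cbn [fst snd].
  replace ((t * fst u) ^ 2 + (t * snd u) ^ 2) with (t ^ 2 * (fst u ^ 2 + snd u ^ 2)) by ring.
  rewrite sqrt_mult_alt, <- pow2_abs, sqrt_pow2 by (apply pow2_ge_0 || apply Rabs_pos).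
  reflexivity.
Qed.

Definition vnorm1 (u : pt) : R := Rabs (fst u) + Rabs (snd u).

Lemma vnorm1_ge0 u : 0 <= vnorm1 u.
Proof. unfold vnorm1; pose proof (Rabs_pos (fst u)); pose proof (Rabs_pos (snd u)); lra. Qed.

Lemma vnorm1_scale t u : vnorm1 (pscale t u) = Rabs t * vnorm1 u.
Proof. unfold vnorm1, pscale; simpl; rewrite !Rabs_mult; ring. Qed.

Lemma vnorm_le_vnorm1 u : vnorm u <= vnorm1 u.
Proof.
  unfold vnorm1; pose proof (Rabs_pos (fst u)); pose proof (Rabs_pos (snd u)).
  apply vnorm_le_iff; [lra|].
  rewrite <- (pow2_abs (fst u)), <- (pow2_abs (snd u)); nra.
Qed.

Lemma vnorm1_sqr_le u : vnorm1 u ^ 2 <= 2 * vnorm u ^ 2.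
Proof.
  unfold vnorm1; rewrite vnorm_sqr, <- (pow2_abs (fst u)), <- (pow2_abs (snd u)).
  pose proof (pow2_ge_0 (Rabs (fst u) - Rabs (snd u))); nra.
Qed.

Definition mnorm1 (A : mat2) : R :=
  Rabs (m11 A) + Rabs (m12 A) + Rabs (m21 A) + Rabs (m22 A).

Lemma mnorm1_ge0 A : 0 <= mnorm1 A.
Proof.
  unfold mnorm1; pose proof (Rabs_pos (m11 A)); pose proof (Rabs_pos (m12 A)).
  pose proof (Rabs_pos (m21 A)); pose proof (Rabs_pos (m22 A)); lra.
Qed.

Lemma vnorm_mapply_le A u : vnorm (mapply A u) <= mnorm1 A * vnorm u.
Proof.
  eapply Rle_trans; [apply vnorm_le_vnorm1|]; unfold vnorm1, mnorm1, mapply; cbn [fst snd].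
  pose proof (Rabs_lin2_le (m11 A) (m12 A) (fst u) (snd u)).
  pose proof (Rabs_lin2_le (m21 A) (m22 A) (fst u) (snd u)).
  pose proof (Rabs_fst_le_vnorm u); pose proof (Rabs_snd_le_vnorm u).
  pose proof (Rabs_pos (m11 A)); pose proof (Rabs_pos (m12 A)).
  pose proof (Rabs_pos (m21 A)); pose proof (Rabs_pos (m22 A)); nra.
Qed.

Lemma opnorm_spec A :
  (forall u, vnorm u <= 1 -> vnorm (mapply A u) <= opnorm A) /\ opnorm A <= mnorm1 A.
Proof.
  destruct (Lub_Rbar_real_spec (fun s => exists u, vnorm u <= 1 /\ s = vnorm (mapply A u))
              (vnorm (mapply A (0, 0))) (mnorm1 A)) as [Hub Hle].
  - exists (0, 0); split; [rewrite vnorm_zero; lra | reflexivity].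
  - intros s [u [Hu ->]]; eapply Rle_trans; [apply vnorm_mapply_le|].
    pose proof (mnorm1_ge0 A); nra.
  - split; [intros u Hu; apply Hub; eauto | exact Hle].
Qed.

Lemma opnorm_le_mnorm1 A : opnorm A <= mnorm1 A.
Proof. apply opnorm_spec. Qed.

Lemma mnorm1_le_opnorm A : mnorm1 A <= 4 * opnorm A.
Proof.
  destruct (opnorm_spec A) as [Hop _].
  assert (H1 : vnorm (mapply A (1, 0)) <= opnorm A)
    by (apply Hop, vnorm_le_iff; cbn [fst snd]; lra).
  assert (H2 : vnorm (mapply A (0, 1)) <= opnorm A)
    by (apply Hop, vnorm_le_iff; cbn [fst snd]; lra).
  pose proof (Rabs_fst_le_vnorm (mapply A (1, 0))).
  pose proof (Rabs_snd_le_vnorm (mapply A (1, 0))).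
  pose proof (Rabs_fst_le_vnorm (mapply A (0, 1))).
  pose proof (Rabs_snd_le_vnorm (mapply A (0, 1))).
  unfold mapply in *; cbn [fst snd] in *.
  rewrite !Rmult_1_r, !Rmult_0_r, Rplus_0_r, Rplus_0_l, Rplus_0_r, Rplus_0_l in *.
  unfold mnorm1; lra.
Qed.

Definition mmul (A B : mat2) : mat2 :=
  Mat2 (m11 A * m11 B + m12 A * m21 B) (m11 A * m12 B + m12 A * m22 B)
       (m21 A * m11 B + m22 A * m21 B) (m21 A * m12 B + m22 A * m22 B).

Definition madj (M : mat2) : mat2 := Mat2 (m22 M) (- m12 M) (- m21 M) (m11 M).

Lemma mat2_ext A B :
  m11 A = m11 B -> m12 A = m12 B -> m21 A = m21 B -> m22 A = m22 B -> A = B.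
Proof. destruct A, B; simpl; intros; subst; reflexivity. Qed.

Lemma mapply_mmul A B u : mapply (mmul A B) u = mapply A (mapply B u).
Proof. unfold mapply, mmul; simpl; f_equal; ring. Qed.

Lemma mapply_padd A u v : mapply A (padd u v) = padd (mapply A u) (mapply A v).
Proof. unfold mapply, padd; simpl; f_equal; ring. Qed.

Lemma mapply_psub A u v : mapply A (psub u v) = psub (mapply A u) (mapply A v).
Proof. unfold mapply, psub; simpl; f_equal; ring. Qed.

Lemma mapply_pscale A t u : mapply A (pscale t u) = pscale t (mapply A u).
Proof. unfold mapply, pscale; simpl; f_equal; ring. Qed.

Lemma mdet_mmul A B : mdet (mmul A B) = mdet A * mdet B.
Proof. unfold mdet, mmul; simpl; ring. Qed.

Lemma mdet_madj M : mdet (madj M) = mdet M.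
Proof. unfold mdet, madj; simpl; ring. Qed.

Lemma mnorm1_madj M : mnorm1 (madj M) = mnorm1 M.
Proof. unfold mnorm1, madj; simpl; rewrite !Rabs_Ropp; ring. Qed.

Lemma mmul_madj_l M : mdet M = 1 -> mmul (madj M) M = mI.
Proof. unfold mdet; intros H; apply mat2_ext; simpl; lra. Qed.

Lemma mmul_madj_r M : mdet M = 1 -> mmul M (madj M) = mI.
Proof. unfold mdet; intros H; apply mat2_ext; simpl; lra. Qed.

Lemma mapply_mI u : mapply mI u = u.
Proof. destruct u; unfold mapply, mI; simpl; f_equal; ring. Qed.

Lemma mapply_madj_l M u : mdet M = 1 -> mapply (madj M) (mapply M u) = u.
Proof. intros H; rewrite <- mapply_mmul, mmul_madj_l, mapply_mI; auto. Qed.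

Lemma mapply_madj_r M u : mdet M = 1 -> mapply M (mapply (madj M) u) = u.
Proof. intros H; rewrite <- mapply_mmul, mmul_madj_r, mapply_mI; auto. Qed.

Lemma mnorm1_mmul_le A B : mnorm1 (mmul A B) <= mnorm1 A * mnorm1 B.
Proof.
  unfold mnorm1, mmul; simpl.
  pose proof (Rabs_lin2_le (m11 A) (m12 A) (m11 B) (m21 B)).
  pose proof (Rabs_lin2_le (m11 A) (m12 A) (m12 B) (m22 B)).
  pose proof (Rabs_lin2_le (m21 A) (m22 A) (m11 B) (m21 B)).
  pose proof (Rabs_lin2_le (m21 A) (m22 A) (m12 B) (m22 B)).
  pose proof (Rabs_pos (m11 A)); pose proof (Rabs_pos (m12 A));
  pose proof (Rabs_pos (m21 A)); pose proof (Rabs_pos (m22 A));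
  pose proof (Rabs_pos (m11 B)); pose proof (Rabs_pos (m12 B));
  pose proof (Rabs_pos (m21 B)); pose proof (Rabs_pos (m22 B)); nra.
Qed.

Lemma mnorm1_mmul3_le A X B :
  mnorm1 (mmul A (mmul X B)) <= mnorm1 A * mnorm1 X * mnorm1 B.
Proof.
  eapply Rle_trans; [apply mnorm1_mmul_le|]; rewrite Rmult_assoc.
  apply Rmult_le_compat_l; [apply mnorm1_ge0 | apply mnorm1_mmul_le].
Qed.

Lemma mmul3_msub_mI A X B :
  mmul A B = mI -> mmul A (mmul (msub X mI) B) = msub (mmul A (mmul X B)) mI.
Proof.
  intros H; assert (H11 := f_equal m11 H); assert (H12 := f_equal m12 H);
  assert (H21 := f_equal m21 H); assert (H22 := f_equal m22 H).
  unfold mmul, mI in *; simpl in *; apply mat2_ext; simpl; lra.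
Qed.

Definition madd (A B : mat2) : mat2 :=
  Mat2 (m11 A + m11 B) (m12 A + m12 B) (m21 A + m21 B) (m22 A + m22 B).

Definition outer (u v : pt) : mat2 :=
  Mat2 (fst u * fst v) (fst u * snd v) (snd u * fst v) (snd u * snd v).

Lemma mnorm1_madd_le A B : mnorm1 (madd A B) <= mnorm1 A + mnorm1 B.
Proof.
  unfold mnorm1, madd; simpl.
  pose proof (Rabs_triang (m11 A) (m11 B)); pose proof (Rabs_triang (m12 A) (m12 B)).
  pose proof (Rabs_triang (m21 A) (m21 B)); pose proof (Rabs_triang (m22 A) (m22 B)); lra.
Qed.

Lemma mnorm1_outer u v : mnorm1 (outer u v) = vnorm1 u * vnorm1 v.
Proof. unfold mnorm1, outer, vnorm1; simpl; rewrite !Rabs_mult; ring. Qed.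

Lemma mnorm1_conj_sub_mI_le A X B :
  mmul A B = mI ->
  mnorm1 (msub (mmul A (mmul X B)) mI) <= mnorm1 A * mnorm1 (msub X mI) * mnorm1 B.
Proof. intros H; rewrite <- mmul3_msub_mI by exact H; apply mnorm1_mmul3_le. Qed.

Lemma mnorm1_conj_sub_mI_le_opnorm M X E : mdet M = 1 -> opnorm M <= E ->
  mnorm1 (msub (mmul (madj M) (mmul X M)) mI) <= 64 * E ^ 2 * opnorm (msub X mI).
Proof.
  intros HM HE; pose proof (mnorm1_le_opnorm M); pose proof (mnorm1_ge0 M).
  pose proof (mnorm1_le_opnorm (msub X mI)); pose proof (mnorm1_ge0 (msub X mI)).
  eapply Rle_trans; [apply mnorm1_conj_sub_mI_le, mmul_madj_l, HM|]; rewrite mnorm1_madj.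
  apply Rle_trans with (4 * E * (4 * opnorm (msub X mI)) * (4 * E));
    [apply Rmult3_le_compat; lra | right; ring].
Qed.

(** * Differential calculus in the plane *)

Definition has_grad (f : R * R -> R) (z : R * R) (a b : R) : Prop :=
  filterdiff f (locally z) (fun v : R * R => a * fst v + b * snd v).

Lemma minus_padd (z v : R * R) : minus (padd z v) z = v.
Proof.
  destruct z, v; unfold minus, plus, opp; simpl.
  unfold prod_plus, prod_opp, plus, opp; simpl; f_equal; ring.
Qed.

Lemma norm_vnorm (v : R * R) : norm v = vnorm v.
Proof.
  destruct v; unfold norm; simpl; unfold prod_norm, vnorm, norm; simpl; unfold abs; simpl.
  rewrite !Rmult_1_r, <- !Rabs_mult, !Rabs_pos_eq by apply Rle_0_sqr; reflexivity.
Qed.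

Lemma ball_of_vnorm (z w : R * R) (d : posreal) : vnorm (psub w z) < d -> ball z d w.
Proof.
  intros H; split; unfold ball; simpl; unfold AbsRing_ball, abs, minus, plus, opp; simpl.
  - eapply Rle_lt_trans; [apply (Rabs_fst_le_vnorm (psub w z)) | exact H].
  - eapply Rle_lt_trans; [apply (Rabs_snd_le_vnorm (psub w z)) | exact H].
Qed.

Lemma has_grad_approx f z a b : has_grad f z a b ->
  forall eps, 0 < eps -> exists delta, 0 < delta /\ forall v, vnorm v < delta ->
    Rabs (f (padd z v) - f z - (a * fst v + b * snd v)) <= eps * vnorm v.
Proof.
  intros [_ Hf] eps Heps.
  destruct (Hf z (fun P HP => HP) (mkposreal eps Heps)) as [d Hd].
  exists d; split; [apply cond_pos|]; intros v Hv.
  specialize (Hd (padd z v)); rewrite minus_padd, norm_vnorm in Hd; apply Hd.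
  apply ball_of_vnorm; unfold psub, padd; simpl.
  replace (fst z + fst v - fst z, snd z + snd v - snd z) with v
    by (destruct v; simpl; f_equal; ring); exact Hv.
Qed.

Lemma has_grad_of_filterdiff (f : R * R -> R) z l a b :
  filterdiff f (locally z) l -> (forall v, l v = a * fst v + b * snd v) -> has_grad f z a b.
Proof. intros H He; eapply filterdiff_ext_lin; eauto. Qed.

Lemma has_grad_eq f z a b a' b' : has_grad f z a b -> a = a' -> b = b' -> has_grad f z a' b'.
Proof. intros H -> ->; exact H. Qed.

Lemma has_grad_fst z : has_grad fst z 1 0.
Proof.
  eapply has_grad_of_filterdiff; [apply filterdiff_linear, is_linear_fst | intros; simpl; ring].
Qed.

Lemma has_grad_snd z : has_grad snd z 0 1.
Proof.
  eapply has_grad_of_filterdiff; [apply filterdiff_linear, is_linear_snd | intros; simpl; ring].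
Qed.

Lemma has_grad_const c z : has_grad (fun _ => c) z 0 0.
Proof.
  eapply has_grad_of_filterdiff; [apply filterdiff_const | intros; simpl; unfold zero; simpl; ring].
Qed.

Lemma has_grad_plus f g z a b c d : has_grad f z a b -> has_grad g z c d ->
  has_grad (fun w => f w + g w) z (a + c) (b + d).
Proof.
  intros Hf Hg; eapply has_grad_of_filterdiff; [apply (filterdiff_plus_fct _ _ _ _ Hf Hg)|].
  intros; simpl; unfold plus; simpl; ring.
Qed.

Lemma has_grad_opp f z a b : has_grad f z a b -> has_grad (fun w => - f w) z (- a) (- b).
Proof.
  intros Hf; eapply has_grad_of_filterdiff; [apply (filterdiff_opp_fct _ _ Hf)|].
  intros; simpl; unfold opp; simpl; ring.
Qed.

Lemma has_grad_mult f g z a b c d : has_grad f z a b -> has_grad g z c d ->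
  has_grad (fun w => f w * g w) z (a * g z + f z * c) (b * g z + f z * d).
Proof.
  intros Hf Hg; eapply has_grad_of_filterdiff.
  - apply (filterdiff_mult_fct f g z _ _ Rmult_comm Hf Hg).
  - intros; simpl; unfold plus, mult; simpl; ring.
Qed.

Lemma has_grad_comp f (phi : R -> R) z a b d : has_grad f z a b -> is_derive phi (f z) d ->
  has_grad (fun w => phi (f w)) z (d * a) (d * b).
Proof.
  intros Hf Hphi; eapply has_grad_of_filterdiff; [apply (filterdiff_comp' f phi z _ _ Hf Hphi)|].
  intros; simpl; unfold scal; simpl; unfold mult; simpl; ring.
Qed.

Lemma has_grad_continuous f z a b : has_grad f z a b -> continuous f z.
Proof.
  intros H; apply (filterdiff_continuous (K := R_AbsRing) (V := R_NormedModule) f).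
  eexists; exact H.
Qed.

Lemma has_deriv_pair f1 f2 z a b c d M : has_grad f1 z a b -> has_grad f2 z c d ->
  Mat2 a b c d = M -> has_deriv (fun w => (f1 w, f2 w)) z M.
Proof.
  intros H1 H2 <- eps Heps.
  destruct (has_grad_approx _ _ _ _ H1 (eps / 2)) as [d1 [Hd1 K1]]; [lra|].
  destruct (has_grad_approx _ _ _ _ H2 (eps / 2)) as [d2 [Hd2 K2]]; [lra|].
  exists (Rmin d1 d2); split; [apply Rmin_pos; auto|]; intros v Hv.
  specialize (K1 v (Rlt_le_trans _ _ _ Hv (Rmin_l _ _))).
  specialize (K2 v (Rlt_le_trans _ _ _ Hv (Rmin_r _ _))).
  eapply Rle_trans; [apply vnorm_le_vnorm1|]; unfold vnorm1, psub, mapply; simpl; lra.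
Qed.

Lemma cont2_plus (f g : R * R -> R) z :
  continuous f z -> continuous g z -> continuous (fun w => f w + g w) z.
Proof. apply (continuous_plus f g z). Qed.

Lemma cont2_mult (f g : R * R -> R) z :
  continuous f z -> continuous g z -> continuous (fun w => f w * g w) z.
Proof. apply (continuous_mult f g z). Qed.

Lemma cont2_opp (f : R * R -> R) z : continuous f z -> continuous (fun w => - f w) z.
Proof. apply (continuous_opp f z). Qed.

Lemma cont2_fst (z : R * R) : continuous (fun w : R * R => fst w) z.
Proof. destruct z; apply continuous_fst. Qed.

Lemma cont2_snd (z : R * R) : continuous (fun w : R * R => snd w) z.
Proof. destruct z; apply continuous_snd. Qed.

Lemma cont2_comp (f : R * R -> R) (phi : R -> R) z :
  continuous f z -> continuous phi (f z) -> continuous (fun w => phi (f w)) z.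
Proof. apply (continuous_comp f phi z). Qed.

Lemma continuous_approx (f : R * R -> R) z : continuous f z ->
  forall eps, 0 < eps -> exists delta, 0 < delta /\
    forall w, vnorm (psub w z) < delta -> Rabs (f w - f z) < eps.
Proof.
  intros Hf eps Heps.
  destruct (Hf _ (locally_ball (f z) (mkposreal eps Heps))) as [d Hd].
  exists d; split; [apply cond_pos|]; intros w Hw; apply (Hd w), ball_of_vnorm, Hw.
Qed.

Lemma mat_continuous_of_entries (D : pt -> mat2) :
  (forall z, continuous (fun w => m11 (D w)) z) ->
  (forall z, continuous (fun w => m12 (D w)) z) ->
  (forall z, continuous (fun w => m21 (D w)) z) ->
  (forall z, continuous (fun w => m22 (D w)) z) -> mat_continuous D.
Proof.
  intros C11 C12 C21 C22 z eps Heps.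
  destruct (continuous_approx _ _ (C11 z) (eps / 4)) as [d1 [P1 Q1]]; [lra|].
  destruct (continuous_approx _ _ (C12 z) (eps / 4)) as [d2 [P2 Q2]]; [lra|].
  destruct (continuous_approx _ _ (C21 z) (eps / 4)) as [d3 [P3 Q3]]; [lra|].
  destruct (continuous_approx _ _ (C22 z) (eps / 4)) as [d4 [P4 Q4]]; [lra|].
  exists (Rmin (Rmin d1 d2) (Rmin d3 d4)); split; [repeat apply Rmin_pos; auto|].
  intros w Hw.
  pose proof (Rmin_l (Rmin d1 d2) (Rmin d3 d4)); pose proof (Rmin_r (Rmin d1 d2) (Rmin d3 d4)).
  pose proof (Rmin_l d1 d2); pose proof (Rmin_r d1 d2).
  pose proof (Rmin_l d3 d4); pose proof (Rmin_r d3 d4).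
  specialize (Q1 w ltac:(lra)); specialize (Q2 w ltac:(lra)).
  specialize (Q3 w ltac:(lra)); specialize (Q4 w ltac:(lra)).
  eapply Rle_lt_trans; [apply opnorm_le_mnorm1|]; unfold mnorm1, msub; simpl; lra.
Qed.

Lemma vnorm_mapply_lt B v d :
  0 < d -> vnorm v < d / (mnorm1 B + 1) -> vnorm (mapply B v) < d.
Proof.
  intros Hd Hv; pose proof (mnorm1_ge0 B); pose proof (vnorm_ge0 v).
  eapply Rle_lt_trans; [apply vnorm_mapply_le|].
  apply Rle_lt_trans with ((mnorm1 B + 1) * vnorm v); [nra|].
  apply Rlt_le_trans with ((mnorm1 B + 1) * (d / (mnorm1 B + 1))).
  - apply Rmult_lt_compat_l; lra.
  - right; field; lra.
Qed.

Lemma has_deriv_mapply_l A g z D :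
  has_deriv g z D -> has_deriv (fun z => mapply A (g z)) z (mmul A D).
Proof.
  intros Hg eps Heps; pose proof (mnorm1_ge0 A).
  destruct (Hg (eps / (mnorm1 A + 1))) as [d [Hd Hv]]; [apply Rdiv_lt_0_compat; lra|].
  exists d; split; [exact Hd|]; intros v Hvd.
  rewrite mapply_mmul, <- !mapply_psub.
  eapply Rle_trans; [apply vnorm_mapply_le|].
  eapply Rle_trans; [apply Rmult_le_compat_l; [lra | exact (Hv v Hvd)]|].
  rewrite <- Rmult_assoc; apply Rmult_le_compat_r; [apply vnorm_ge0|].
  apply Rmult_div_succ_le; lra.
Qed.

Lemma has_deriv_comp_mapply B g z D :
  has_deriv g (mapply B z) D -> has_deriv (fun z => g (mapply B z)) z (mmul D B).
Proof.
  intros Hg eps Heps; pose proof (mnorm1_ge0 B).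
  destruct (Hg (eps / (mnorm1 B + 1))) as [d [Hd Hv]]; [apply Rdiv_lt_0_compat; lra|].
  exists (d / (mnorm1 B + 1)); split; [apply Rdiv_lt_0_compat; lra|]; intros v Hvd.
  rewrite mapply_padd, mapply_mmul.
  eapply Rle_trans; [exact (Hv _ (vnorm_mapply_lt B v d Hd Hvd))|].
  pose proof (vnorm_mapply_le B v); pose proof (vnorm_ge0 v).
  assert (0 <= eps / (mnorm1 B + 1)) by (apply Rdiv_le_0_compat; lra).
  apply Rle_trans with (mnorm1 B * (eps / (mnorm1 B + 1)) * vnorm v); [nra|].
  apply Rmult_le_compat_r; [lra | apply Rmult_div_succ_le; lra].
Qed.

Lemma mat_continuous_comp_mapply B D :
  mat_continuous D -> mat_continuous (fun z => D (mapply B z)).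
Proof.
  intros HD z eps Heps; pose proof (mnorm1_ge0 B).
  destruct (HD (mapply B z) eps Heps) as [d [Hd Hw]].
  exists (d / (mnorm1 B + 1)); split; [apply Rdiv_lt_0_compat; lra|]; intros w Hwz.
  apply Hw; rewrite <- mapply_psub; exact (vnorm_mapply_lt B _ d Hd Hwz).
Qed.

Lemma mat_continuous_mmul3 A B D :
  mat_continuous D -> mat_continuous (fun z => mmul A (mmul (D z) B)).
Proof.
  intros HD z eps Heps; pose proof (mnorm1_ge0 A); pose proof (mnorm1_ge0 B).
  set (c := 4 * mnorm1 A * mnorm1 B).
  assert (Hc : 0 <= c) by (unfold c; nra).
  destruct (HD z (eps / (c + 1))) as [d [Hd Hw]]; [apply Rdiv_lt_0_compat; lra|].
  exists d; split; [exact Hd|]; intros w Hwz; specialize (Hw w Hwz).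
  set (X := msub (D w) (D z)) in *.
  replace (msub (mmul A (mmul (D w) B)) (mmul A (mmul (D z) B))) with (mmul A (mmul X B))
    by (unfold X, msub, mmul; apply mat2_ext; simpl; ring).
  eapply Rle_lt_trans; [apply opnorm_le_mnorm1|].
  eapply Rle_lt_trans; [apply mnorm1_mmul3_le|].
  pose proof (mnorm1_le_opnorm X); pose proof (mnorm1_ge0 X).
  assert (0 <= mnorm1 A * mnorm1 B) by nra.
  apply Rle_lt_trans with (c * opnorm X); [unfold c; nra|].
  apply Rle_lt_trans with (c * (eps / (c + 1))); [apply Rmult_le_compat_l; lra|].
  assert (0 < eps / (c + 1)) by (apply Rdiv_lt_0_compat; lra).
  replace (c * (eps / (c + 1))) with (eps - eps / (c + 1)) by (field; lra); lra.
Qed.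

(** * The cutoff *)

Definition cutoff_var (k q : R) : R := (q - k) / (1 - k).

Definition cutoff_bump (k q : R) : R := cutoff_var k q * (1 - cutoff_var k q).

Definition dcutoff (k q : R) : R :=
  - (3 / (1 - k)) * (cutoff_bump k q + Rabs (cutoff_bump k q)).

(* [x + |x|] is twice the positive part of [x].  The primitive [cutoff k] is the
   smoothstep in the coordinate [cutoff_var k] on [[k,1]], [1] below [k] and [0] above
   [1]; defining it as a primitive gives its derivative by the FTC. *)
Definition cutoff (k q : R) : R := 1 + RInt (dcutoff k) k q.

Definition smoothstep (s : R) : R := 1 - 3 * s ^ 2 + 2 * s ^ 3.

Lemma cutoff_var_le0 k q : k < 1 -> q <= k -> cutoff_var k q <= 0.
Proof.
  intros Hk Hq; unfold cutoff_var, Rdiv.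
  apply Rmult_le_0_r; [lra | left; apply Rinv_0_lt_compat; lra].
Qed.

Lemma cutoff_var_ge1 k q : k < 1 -> 1 <= q -> 1 <= cutoff_var k q.
Proof.
  intros Hk Hq; unfold cutoff_var.
  apply Rmult_le_reg_r with (1 - k); [lra|]; field_simplify; lra.
Qed.

Lemma cutoff_var_mid k q : k < 1 -> k <= q <= 1 -> 0 <= cutoff_var k q <= 1.
Proof.
  intros Hk Hq; unfold cutoff_var; split.
  - apply Rdiv_le_0_compat; lra.
  - apply Rmult_le_reg_r with (1 - k); [lra|]; field_simplify; lra.
Qed.

Lemma cutoff_bump_continuous k q : k < 1 -> continuous (cutoff_bump k) q.
Proof.
  intros Hk; apply (ex_derive_continuous (K := R_AbsRing) (cutoff_bump k)).
  unfold cutoff_bump, cutoff_var; auto_derive; lra.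
Qed.

Lemma dcutoff_continuous k q : k < 1 -> continuous (dcutoff k) q.
Proof.
  intros Hk; unfold dcutoff.
  apply (continuous_mult (fun _ => - (3 / (1 - k)))); [apply continuous_const|].
  apply (continuous_plus (cutoff_bump k) (fun q => Rabs (cutoff_bump k q)));
    [|apply continuous_Rabs_comp];
    apply cutoff_bump_continuous, Hk.
Qed.

Lemma is_derive_cutoff k q : k < 1 -> is_derive (cutoff k) q (dcutoff k q).
Proof.
  intros Hk; unfold cutoff.
  replace (dcutoff k q) with (plus zero (dcutoff k q)) by (unfold plus, zero; simpl; ring).
  apply (is_derive_plus (fun _ => 1) (fun b => RInt (dcutoff k) k b)).
  - apply (is_derive_const (K := R_AbsRing) (V := R_NormedModule)).
  - apply (is_derive_RInt (V := R_CompleteNormedModule) _ _ k q).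
    + exists (mkposreal 1 Rlt_0_1); intros y _.
      apply RInt_correct, ex_RInt_continuous; intros; apply dcutoff_continuous, Hk.
    + apply dcutoff_continuous, Hk.
Qed.

Lemma dcutoff_eq0 k q : k < 1 -> q <= k \/ 1 <= q -> dcutoff k q = 0.
Proof.
  intros Hk Hq; unfold dcutoff, cutoff_bump.
  assert (Hs : cutoff_var k q <= 0 \/ 1 <= cutoff_var k q)
    by (destruct Hq; [left; apply cutoff_var_le0 | right; apply cutoff_var_ge1]; auto).
  rewrite Rabs_left1 by nra; ring.
Qed.

Lemma dcutoff_mid k q :
  k < 1 -> k <= q <= 1 -> dcutoff k q = - (6 / (1 - k)) * cutoff_bump k q.
Proof.
  intros Hk Hq; pose proof (cutoff_var_mid k q Hk Hq); unfold dcutoff.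
  rewrite Rabs_pos_eq by (unfold cutoff_bump; nra); unfold Rdiv; ring.
Qed.

Lemma Rabs_dcutoff_le k q : k < 1 -> Rabs (dcutoff k q) <= 3 / (1 - k).
Proof.
  intros Hk; unfold dcutoff.
  assert (cutoff_bump k q <= 1 / 4)
    by (unfold cutoff_bump; pose proof (pow2_ge_0 (cutoff_var k q - 1 / 2)); nra).
  assert (0 <= cutoff_bump k q + Rabs (cutoff_bump k q) <= 1 / 2)
    by (destruct (Rle_or_lt 0 (cutoff_bump k q));
        [rewrite Rabs_pos_eq | rewrite Rabs_left]; lra).
  assert (0 < 3 / (1 - k)) by (apply Rdiv_lt_0_compat; lra).
  rewrite Rabs_mult, Rabs_Ropp, (Rabs_pos_eq (3 / _)), (Rabs_pos_eq (_ + _)); nra.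
Qed.

Lemma Rabs_dcutoff_mul_le k q : k < 1 -> 0 <= q -> Rabs (dcutoff k q) * q <= 3 / (1 - k).
Proof.
  intros Hk Hq; destruct (Rle_or_lt 1 q).
  - rewrite dcutoff_eq0, Rabs_R0, Rmult_0_l by auto; apply Rlt_le, Rdiv_lt_0_compat; lra.
  - pose proof (Rabs_dcutoff_le k q Hk); pose proof (Rabs_pos (dcutoff k q)); nra.
Qed.

Lemma RInt_dcutoff_eq0 k a b :
  k < 1 -> a <= b -> b <= k \/ 1 <= a -> RInt (dcutoff k) a b = 0.
Proof.
  intros Hk Hab Hout.
  rewrite (RInt_ext _ (fun _ => 0)), RInt_const; [unfold scal; simpl; unfold mult; simpl; ring|].
  rewrite Rmin_left, Rmax_right by lra; intros x Hx; apply dcutoff_eq0; lra.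
Qed.

Lemma cutoff_le k q : 0 < k < 1 -> q <= k -> cutoff k q = 1.
Proof.
  intros Hk Hq; unfold cutoff.
  rewrite <- (opp_RInt_swap (dcutoff k)).
  - rewrite RInt_dcutoff_eq0 by lra; unfold opp; simpl; ring.
  - apply ex_RInt_continuous; intros; apply dcutoff_continuous; lra.
Qed.

Lemma cutoff_mid k q : 0 < k < 1 -> k <= q <= 1 -> cutoff k q = smoothstep (cutoff_var k q).
Proof.
  intros Hk Hq; unfold cutoff.
  rewrite (RInt_ext _ (fun x => - (6 / (1 - k)) * cutoff_bump k x)).
  2:{ rewrite Rmin_left, Rmax_right by lra; intros x Hx; apply dcutoff_mid; lra. }
  rewrite (is_RInt_unique _ k q (minus (smoothstep (cutoff_var k q) - 1)
                                       (smoothstep (cutoff_var k k) - 1))).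
  - unfold minus, plus, opp; simpl; unfold smoothstep, cutoff_var.
    replace (k - k) with 0 by ring; field; lra.
  - apply (is_RInt_derive (fun x => smoothstep (cutoff_var k x) - 1)).
    + intros x _; unfold smoothstep, cutoff_bump, cutoff_var; auto_derive; [lra | field; lra].
    + intros x _; apply (continuous_mult (fun _ => - (6 / (1 - k))) (cutoff_bump k)).
      * apply continuous_const.
      * apply cutoff_bump_continuous; lra.
Qed.

Lemma cutoff_ge k q : 0 < k < 1 -> 1 <= q -> cutoff k q = 0.
Proof.
  intros Hk Hq.
  assert (H1 : cutoff k 1 = 0).
  { rewrite cutoff_mid by lra; unfold cutoff_var, smoothstep.
    replace ((1 - k) / (1 - k)) with 1 by (field; lra); ring. }
  unfold cutoff in *; rewrite <- (RInt_Chasles (dcutoff k) k 1 q).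
  - rewrite (RInt_dcutoff_eq0 k 1 q) by lra; unfold plus; simpl; lra.
  - apply ex_RInt_continuous; intros; apply dcutoff_continuous; lra.
  - apply ex_RInt_continuous; intros; apply dcutoff_continuous; lra.
Qed.

Lemma cutoff_bounds k q : 0 < k < 1 -> 0 <= cutoff k q <= 1.
Proof.
  intros Hk; destruct (Rle_or_lt q k) as [Hq | Hq]; [rewrite cutoff_le by auto; lra|].
  destruct (Rle_or_lt q 1) as [Hq1 | Hq1]; [|rewrite cutoff_ge by lra; lra].
  rewrite cutoff_mid by lra; pose proof (cutoff_var_mid k q ltac:(lra) ltac:(lra)).
  unfold smoothstep; set (s := cutoff_var k q) in *.
  pose proof (pow2_ge_0 s); pose proof (pow2_ge_0 (1 - s)); split; nra.
Qed.

(** * Rotations *)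

Definition hcos (s : R) : R := (1 - s ^ 2) / (1 + s ^ 2).

Definition hsin (s : R) : R := 2 * s / (1 + s ^ 2).

Definition dhcos (s : R) : R := - 4 * s / (1 + s ^ 2) ^ 2.

Definition dhsin (s : R) : R := 2 * (1 - s ^ 2) / (1 + s ^ 2) ^ 2.

(* The rotation by the angle [2 atan s]: parametrising rotations rationally by the
   tangent of the half angle keeps every identity below a field identity. *)
Definition rotm (s : R) : mat2 := Mat2 (hcos s) (- hsin s) (hsin s) (hcos s).

Definition drotm (s : R) : mat2 := Mat2 (dhcos s) (- dhsin s) (dhsin s) (dhcos s).

Lemma one_add_sqr_pos s : 0 < 1 + s ^ 2.
Proof. pose proof (pow2_ge_0 s); lra. Qed.

Lemma is_derive_hcos s : is_derive hcos s (dhcos s).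
Proof.
  pose proof (one_add_sqr_pos s); unfold hcos, dhcos; auto_derive; [lra | field; lra].
Qed.

Lemma is_derive_hsin s : is_derive hsin s (dhsin s).
Proof.
  pose proof (one_add_sqr_pos s); unfold hsin, dhsin; auto_derive; [lra | field; lra].
Qed.

Lemma continuous_of_ex_derive (f : R -> R) s : ex_derive f s -> continuous f s.
Proof. apply (ex_derive_continuous (K := R_AbsRing) f). Qed.

Lemma hcos_continuous s : continuous hcos s.
Proof. apply continuous_of_ex_derive; eexists; apply is_derive_hcos. Qed.

Lemma hsin_continuous s : continuous hsin s.
Proof. apply continuous_of_ex_derive; eexists; apply is_derive_hsin. Qed.

Lemma dhcos_continuous s : continuous dhcos s.
Proof.
  apply continuous_of_ex_derive; pose proof (one_add_sqr_pos s); unfold dhcos; auto_derive; nra.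
Qed.

Lemma dhsin_continuous s : continuous dhsin s.
Proof.
  apply continuous_of_ex_derive; pose proof (one_add_sqr_pos s); unfold dhsin; auto_derive; nra.
Qed.

Lemma hcos_sqr_add_hsin_sqr s : hcos s ^ 2 + hsin s ^ 2 = 1.
Proof. pose proof (one_add_sqr_pos s); unfold hcos, hsin; field; lra. Qed.

Lemma hcos_dhcos_add_hsin_dhsin s : hcos s * dhcos s + hsin s * dhsin s = 0.
Proof. pose proof (one_add_sqr_pos s); unfold hcos, hsin, dhcos, dhsin; field; lra. Qed.

Lemma rotm_0 : rotm 0 = mI.
Proof. unfold rotm, hcos, hsin, mI; f_equal; field. Qed.

Lemma mmul_rotm_opp s : mmul (rotm (- s)) (rotm s) = mI.
Proof.
  pose proof (one_add_sqr_pos s).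
  unfold mmul, rotm, hcos, hsin, mI; simpl; apply mat2_ext; simpl; field; lra.
Qed.

Lemma sqr_norm_rotm s w :
  fst (mapply (rotm s) w) ^ 2 + snd (mapply (rotm s) w) ^ 2 = fst w ^ 2 + snd w ^ 2.
Proof. pose proof (hcos_sqr_add_hsin_sqr s); unfold mapply, rotm; simpl; nra. Qed.

Lemma vnorm_rotm s w : vnorm (mapply (rotm s) w) = vnorm w.
Proof. unfold vnorm; rewrite sqr_norm_rotm; reflexivity. Qed.

Lemma rotm_half_angle a c :
  a ^ 2 + c ^ 2 = 1 -> 0 < 1 + a -> rotm (c / (1 + a)) = Mat2 a (- c) c a.
Proof.
  intros Hac Ha.
  assert (Ht2 : (c / (1 + a)) ^ 2 = (1 - a) / (1 + a)).
  { replace ((c / (1 + a)) ^ 2) with (c ^ 2 / (1 + a) ^ 2) by (field; lra).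
    replace (c ^ 2) with ((1 - a) * (1 + a)) by nra; field; lra. }
  assert (Hhcos : hcos (c / (1 + a)) = a) by (unfold hcos; rewrite Ht2; field; lra).
  assert (Hhsin : hsin (c / (1 + a)) = c) by (unfold hsin; rewrite Ht2; field; lra).
  unfold rotm; rewrite Hhcos, Hhsin; reflexivity.
Qed.

Lemma mnorm1_rotm_sub_mI s : mnorm1 (msub (rotm s) mI) <= 6 * Rabs s.
Proof.
  pose proof (one_add_sqr_pos s); pose proof (Rabs_pos s).
  assert (Hc : Rabs (hcos s - 1) <= Rabs s).
  { replace (hcos s - 1) with (- (2 * s ^ 2 / (1 + s ^ 2))) by (unfold hcos; field; lra).
    rewrite Rabs_Ropp, Rabs_pos_eq by (apply Rdiv_le_0_compat; nra).
    apply Rmult_le_reg_r with (1 + s ^ 2); [lra|]; field_simplify; [|lra].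
    pose proof (pow2_abs s); pose proof (pow2_ge_0 (Rabs s - 1)); nra. }
  assert (Hs : Rabs (hsin s) <= 2 * Rabs s).
  { unfold hsin, Rdiv; rewrite Rabs_mult, Rabs_mult, Rabs_inv, (Rabs_pos_eq 2),
      (Rabs_pos_eq (1 + _)) by lra.
    assert (Hinv : / (1 + s ^ 2) <= 1) by (rewrite <- Rinv_1; apply Rinv_le_contravar; nra).
    pose proof (Rinv_0_lt_compat _ H); nra. }
  unfold mnorm1, msub, rotm, mI; simpl.
  rewrite !Rminus_0_r, Rabs_Ropp; lra.
Qed.

Lemma vnorm1_drotm_le s w : vnorm1 (mapply (drotm s) w) <= 4 * vnorm1 w.
Proof.
  pose proof (one_add_sqr_pos s).
  assert (Hd : dhcos s ^ 2 + dhsin s ^ 2 = 4 / (1 + s ^ 2) ^ 2)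
    by (unfold dhcos, dhsin; field; lra).
  assert (H4 : 4 / (1 + s ^ 2) ^ 2 <= 4).
  { apply Rmult_le_reg_r with ((1 + s ^ 2) ^ 2); [nra|]; field_simplify; [|lra].
    pose proof (pow2_ge_0 s); nra. }
  assert (Hc : Rabs (dhcos s) <= 2)
    by (rewrite <- (Rabs_pos_eq 2) by lra; apply Rsqr_le_abs_0; unfold Rsqr;
        pose proof (pow2_ge_0 (dhsin s)); simpl in *; nra).
  assert (Hs : Rabs (dhsin s) <= 2)
    by (rewrite <- (Rabs_pos_eq 2) by lra; apply Rsqr_le_abs_0; unfold Rsqr;
        pose proof (pow2_ge_0 (dhcos s)); simpl in *; nra).
  unfold vnorm1, mapply, drotm; simpl.
  pose proof (Rabs_lin2_le (dhcos s) (- dhsin s) (fst w) (snd w)).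
  pose proof (Rabs_lin2_le (dhsin s) (dhcos s) (fst w) (snd w)).
  rewrite Rabs_Ropp in *.
  pose proof (Rabs_pos (fst w)); pose proof (Rabs_pos (snd w)); nra.
Qed.

(* Equality in Hadamard's inequality [det <= |col1| |col2|]. *)
Lemma det1_columns_le1_rotation a b c d :
  a ^ 2 + c ^ 2 <= 1 -> b ^ 2 + d ^ 2 <= 1 -> a * d - b * c = 1 ->
  d = a /\ b = - c /\ a ^ 2 + c ^ 2 = 1.
Proof.
  intros H1 H2 H3.
  assert (E : (a ^ 2 + c ^ 2) * (b ^ 2 + d ^ 2) = (a * d - b * c) ^ 2 + (a * b + c * d) ^ 2)
    by ring.
  rewrite H3 in E.
  assert (Hab : a * b + c * d = 0) by nra.
  assert (Hs1 : a ^ 2 + c ^ 2 = 1) by nra.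
  split; [|split; [|exact Hs1]].
  - transitivity (d * (1 - (a ^ 2 + c ^ 2)) + c * (a * b + c * d) + a * (a * d - b * c));
      [ring | rewrite Hab, Hs1, H3; ring].
  - transitivity (b * (1 - (a ^ 2 + c ^ 2)) + a * (a * b + c * d) - c * (a * d - b * c));
      [ring | rewrite Hab, Hs1, H3; ring].
Qed.

Lemma column_sqr_le1 P r x y : 0 < r -> x ^ 2 + y ^ 2 = 1 ->
  (forall u, vnorm u <= r -> vnorm (mapply P u) <= r) ->
  (m11 P * x + m12 P * y) ^ 2 + (m21 P * x + m22 P * y) ^ 2 <= 1.
Proof.
  intros Hr Hxy HP.
  assert (Hu : vnorm (r * x, r * y) <= r)
    by (apply vnorm_le_iff; [lra | cbn [fst snd]; nra]).
  specialize (HP _ Hu); apply vnorm_le_iff in HP; [|lra].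
  unfold mapply in HP; cbn [fst snd] in HP.
  apply Rmult_le_reg_r with (r ^ 2); [nra | nra].
Qed.

Lemma rotm_of_disk_invariant P r :
  0 < r -> mdet P = 1 -> (forall u, vnorm u <= r -> vnorm (mapply P u) <= r) ->
  mnorm1 (msub P mI) <= 1 / 2 ->
  exists t, Rabs t <= mnorm1 (msub P mI) /\ P = rotm t.
Proof.
  intros Hr Hdet HP Hsmall.
  assert (Hc1 := column_sqr_le1 P r 1 0 Hr); assert (Hc2 := column_sqr_le1 P r 0 1 Hr).
  specialize (Hc1 ltac:(lra) HP); specialize (Hc2 ltac:(lra) HP).
  rewrite !Rmult_1_r, !Rmult_0_r, Rplus_0_r, Rplus_0_r in Hc1.
  rewrite !Rmult_1_r, !Rmult_0_r, Rplus_0_l, Rplus_0_l in Hc2.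
  destruct (det1_columns_le1_rotation _ _ _ _ Hc1 Hc2 Hdet) as [Hd [Hb Hac]].
  assert (Ha : Rabs (m11 P - 1) <= mnorm1 (msub P mI)
            /\ Rabs (m21 P) <= mnorm1 (msub P mI)).
  { unfold mnorm1, msub, mI; simpl; rewrite !Rminus_0_r.
    pose proof (Rabs_pos (m12 P)); pose proof (Rabs_pos (m21 P));
    pose proof (Rabs_pos (m22 P - 1)); pose proof (Rabs_pos (m11 P - 1)); split; lra. }
  destruct Ha as [Ha Hc]; apply Rabs_le_between in Ha.
  exists (m21 P / (1 + m11 P)); split.
  - unfold Rdiv; rewrite Rabs_mult, Rabs_inv, (Rabs_pos_eq (1 + _)) by lra.
    assert (/ (1 + m11 P) <= 1) by (rewrite <- Rinv_1; apply Rinv_le_contravar; lra).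
    pose proof (Rabs_pos (m21 P)); pose proof (Rinv_0_lt_compat (1 + m11 P) ltac:(lra)); nra.
  - rewrite rotm_half_angle by lra; apply mat2_ext; simpl; auto.
Qed.

(** * The twist map *)

Definition radial (r : R) (w : R * R) : R := (fst w * fst w + snd w * snd w) / (r * r).

Definition twist_angle (k r t : R) (w : R * R) : R := t * cutoff k (radial r w).

Definition twist_rate (k r t : R) (w : R * R) : R := 2 * t * dcutoff k (radial r w) / (r * r).

(* The twist rotates the circle of radius [rho] by the angle of parameter
   [t cutoff k (rho^2/r^2)]; the gradient of that parameter at [w] is
   [twist_rate k r t w] times [w], whence the rank-one correction in [twist_deriv]. *)
Definition twist (k r t : R) (w : pt) : pt := mapply (rotm (twist_angle k r t w)) w.

Definition twist_deriv (k r t : R) (w : pt) : mat2 :=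
  let s := twist_angle k r t w in
  madd (rotm s) (outer (mapply (drotm s) w) (pscale (twist_rate k r t w) w)).

Section Twist.

Variables k r : R.
Hypothesis k_bounds : 0 < k < 1.
Hypothesis r_pos : 0 < r.

Lemma has_grad_radial w : has_grad (radial r) w (2 * fst w / (r * r)) (2 * snd w / (r * r)).
Proof.
  pose proof (has_grad_plus _ _ w _ _ _ _ (has_grad_mult _ _ w _ _ _ _ (has_grad_fst w) (has_grad_fst w))
                (has_grad_mult _ _ w _ _ _ _ (has_grad_snd w) (has_grad_snd w))) as Hsum.
  pose proof (has_grad_mult _ _ w _ _ _ _ Hsum (has_grad_const (/ (r * r)) w)) as H.
  unfold radial, Rdiv; simpl in H; apply (has_grad_eq _ _ _ _ _ _ H); field; lra.
Qed.

Lemma has_grad_twist_angle t w :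
  has_grad (twist_angle k r t) w (twist_rate k r t w * fst w) (twist_rate k r t w * snd w).
Proof.
  pose proof (has_grad_comp _ _ w _ _ _ (has_grad_radial w)
                (is_derive_cutoff k (radial r w) ltac:(lra))) as H.
  pose proof (has_grad_mult _ _ w _ _ _ _ (has_grad_const t w) H) as Ht.
  unfold twist_angle, twist_rate; apply (has_grad_eq _ _ _ _ _ _ Ht); field; lra.
Qed.

Lemma has_deriv_twist t w : has_deriv (twist k r t) w (twist_deriv k r t w).
Proof.
  pose proof (has_grad_twist_angle t w) as Hs.
  pose proof (has_grad_comp _ _ w _ _ _ Hs (is_derive_hcos _)) as Hc.
  pose proof (has_grad_opp _ _ _ _ (has_grad_comp _ _ w _ _ _ Hs (is_derive_hsin _))) as Hn.
  pose proof (has_grad_comp _ _ w _ _ _ Hs (is_derive_hsin _)) as Hp.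
  pose proof (has_grad_plus _ _ w _ _ _ _ (has_grad_mult _ _ w _ _ _ _ Hc (has_grad_fst w))
                (has_grad_mult _ _ w _ _ _ _ Hn (has_grad_snd w))) as G1.
  pose proof (has_grad_plus _ _ w _ _ _ _ (has_grad_mult _ _ w _ _ _ _ Hp (has_grad_fst w))
                (has_grad_mult _ _ w _ _ _ _ Hc (has_grad_snd w))) as G2.
  unfold twist, mapply, rotm; cbn [m11 m12 m21 m22].
  apply (has_deriv_pair _ _ _ _ _ _ _ _ G1 G2).
  unfold twist_deriv, madd, outer, rotm, drotm, mapply, pscale; apply mat2_ext; simpl; ring.
Qed.

Lemma twist_angle_continuous t w : continuous (twist_angle k r t) w.
Proof. exact (has_grad_continuous _ _ _ _ (has_grad_twist_angle t w)). Qed.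

Lemma twist_rate_continuous t w : continuous (twist_rate k r t) w.
Proof.
  unfold twist_rate, Rdiv.
  apply (cont2_mult (fun w => 2 * t * dcutoff k (radial r w))); [|apply continuous_const].
  apply (cont2_mult (fun _ => 2 * t)); [apply continuous_const|].
  apply cont2_comp; [exact (has_grad_continuous _ _ _ _ (has_grad_radial w))|].
  apply dcutoff_continuous; lra.
Qed.

Lemma twist_deriv_continuous t : mat_continuous (twist_deriv k r t).
Proof.
  apply mat_continuous_of_entries; intros z;
    unfold twist_deriv, madd, outer, rotm, drotm, mapply, pscale; simpl;
    repeat lazymatch goal with
      | |- continuous (fun w => _ + _) _ => apply cont2_plus
      | |- continuous (fun w => _ * _) _ => apply cont2_mult
      | |- continuous (fun w => - _) _ => apply cont2_opp
      | |- continuous fst _ => apply cont2_fst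
      | |- continuous snd _ => apply cont2_snd
      | |- continuous (twist_rate k r t) _ => apply twist_rate_continuous
      | |- continuous (fun w => ?phi (twist_angle k r t w)) _ =>
          apply cont2_comp; [apply twist_angle_continuous|]
      | |- continuous hcos _ => apply hcos_continuous
      | |- continuous hsin _ => apply hsin_continuous
      | |- continuous dhcos _ => apply dhcos_continuous
      | |- continuous dhsin _ => apply dhsin_continuous
      end.
Qed.

Lemma mdet_twist_deriv t w : mdet (twist_deriv k r t w) = 1.
Proof.
  pose proof (hcos_sqr_add_hsin_sqr (twist_angle k r t w)) as Hrot.
  pose proof (hcos_dhcos_add_hsin_dhsin (twist_angle k r t w)) as Hskew.
  unfold mdet, twist_deriv, madd, outer, rotm, drotm, mapply, pscale; simpl.
  set (s := twist_angle k r t w) in *; set (m := twist_rate k r t w).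
  (* [rotm s] is orthogonal and [rotm s^T drotm s] is skew, so the rank-one term
     does not change the determinant. *)
  transitivity ((hcos s ^ 2 + hsin s ^ 2)
                + m * (fst w ^ 2 + snd w ^ 2) * (hcos s * dhcos s + hsin s * dhsin s)).
  - ring.
  - rewrite Hrot, Hskew; ring.
Qed.

Lemma radial_eq w : radial r w = (vnorm w / r) ^ 2.
Proof.
  unfold Rdiv; rewrite Rpow_mult_distr, vnorm_sqr; unfold radial; simpl; field; lra.
Qed.

Lemma twist_angle_rotm t s w :
  twist_angle k r t (mapply (rotm s) w) = twist_angle k r t w.
Proof.
  unfold twist_angle, radial; pose proof (sqr_norm_rotm s w); simpl in *.
  do 3 f_equal; lra.
Qed.

Lemma twist_opp_twist t w : twist k r (- t) (twist k r t w) = w.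
Proof.
  assert (Hangle : twist_angle k r (- t) (twist k r t w) = - twist_angle k r t w)
    by (unfold twist; rewrite twist_angle_rotm; unfold twist_angle; ring).
  unfold twist at 1; rewrite Hangle.
  unfold twist; rewrite <- mapply_mmul, mmul_rotm_opp; apply mapply_mI.
Qed.

Lemma vnorm_twist t w : vnorm (twist k r t w) = vnorm w.
Proof. apply vnorm_rotm. Qed.

Lemma twist_outside t w : r <= vnorm w -> twist k r t w = w.
Proof.
  intros Hw; unfold twist, twist_angle.
  rewrite cutoff_ge, Rmult_0_r, rotm_0 by
    (auto; rewrite radial_eq; assert (1 <= vnorm w / r)
       by (apply Rmult_le_reg_r with r; [lra | field_simplify; lra]); nra).
  apply mapply_mI.
Qed.

Lemma twist_inside t w : vnorm w <= sqrt k * r -> twist k r t w = mapply (rotm t) w.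
Proof.
  intros Hw; unfold twist, twist_angle.
  rewrite cutoff_le, Rmult_1_r by
    (auto; rewrite radial_eq; pose proof (vnorm_ge0 w); rewrite <- (sqrt_sqrt k) by lra;
     assert (vnorm w / r <= sqrt k)
       by (apply Rmult_le_reg_r with r; [lra | field_simplify; lra]);
     assert (0 <= vnorm w / r) by (apply Rdiv_le_0_compat; lra); nra).
  reflexivity.
Qed.

Lemma Rabs_twist_angle_le t w : Rabs (twist_angle k r t w) <= Rabs t.
Proof.
  unfold twist_angle; rewrite Rabs_mult; pose proof (cutoff_bounds k (radial r w) k_bounds).
  rewrite (Rabs_pos_eq (cutoff _ _)) by lra; pose proof (Rabs_pos t); nra.
Qed.

Lemma Rabs_twist_rate_mul_le t w :
  Rabs (twist_rate k r t w) * vnorm w ^ 2 <= 6 * Rabs t / (1 - k).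
Proof.
  assert (Hq : vnorm w ^ 2 = radial r w * (r * r)) by (rewrite radial_eq; field; lra).
  assert (Hrate : Rabs (twist_rate k r t w) * vnorm w ^ 2
                  = 2 * Rabs t * (Rabs (dcutoff k (radial r w)) * radial r w)).
  { rewrite Hq; unfold twist_rate, Rdiv; rewrite !Rabs_mult, Rabs_inv, (Rabs_pos_eq 2),
      (Rabs_pos_eq (r * r)) by nra; field; lra. }
  rewrite Hrate; pose proof (Rabs_pos t).
  pose proof (Rabs_dcutoff_mul_le k (radial r w) ltac:(lra)
                ltac:(rewrite radial_eq; apply pow2_ge_0)).
  unfold Rdiv in *; nra.
Qed.

Lemma mnorm1_twist_deriv_sub_mI t w :
  mnorm1 (msub (twist_deriv k r t w) mI) <= 54 * Rabs t / (1 - k).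
Proof.
  pose proof (Rabs_twist_angle_le t w); pose proof (Rabs_twist_rate_mul_le t w).
  set (s := twist_angle k r t w) in *; set (m := twist_rate k r t w) in *.
  replace (msub (twist_deriv k r t w) mI)
    with (madd (msub (rotm s) mI) (outer (mapply (drotm s) w) (pscale m w)))
    by (unfold twist_deriv, madd, msub, s, m; apply mat2_ext; simpl; ring).
  eapply Rle_trans; [apply mnorm1_madd_le|]; rewrite mnorm1_outer, vnorm1_scale.
  pose proof (mnorm1_rotm_sub_mI s); pose proof (vnorm1_drotm_le s w).
  pose proof (vnorm1_sqr_le w); pose proof (vnorm1_ge0 w).
  pose proof (Rabs_pos m); pose proof (Rabs_pos t).
  assert (Rabs t <= Rabs t / (1 - k))
    by (apply Rmult_le_reg_r with (1 - k); [lra | field_simplify; nra]).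
  assert (vnorm1 (mapply (drotm s) w) * (Rabs m * vnorm1 w) <= 48 * Rabs t / (1 - k)).
  { apply Rle_trans with (4 * vnorm1 w * (Rabs m * vnorm1 w)); [apply Rmult_le_compat_r; nra|].
    unfold Rdiv in *; nra. }
  lra.
Qed.

End Twist.

Definition conj_twist (M : mat2) (k r t : R) (z : pt) : pt :=
  mapply M (twist k r t (mapply (madj M) z)).

Definition conj_twist_deriv (M : mat2) (k r t : R) (z : pt) : mat2 :=
  mmul M (mmul (twist_deriv k r t (mapply (madj M) z)) (madj M)).

Section ConjTwist.

Variables (M : mat2) (k r : R).
Hypothesis M_det : mdet M = 1.
Hypothesis k_bounds : 0 < k < 1.
Hypothesis r_pos : 0 < r.

Lemma conj_twist_C1 t : C1_with (conj_twist M k r t) (conj_twist_deriv M k r t).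
Proof.
  split.
  - intros z; apply has_deriv_mapply_l, has_deriv_comp_mapply, has_deriv_twist; lra.
  - apply mat_continuous_mmul3, mat_continuous_comp_mapply, twist_deriv_continuous; lra.
Qed.

Lemma conj_twist_opp t z : conj_twist M k r (- t) (conj_twist M k r t z) = z.
Proof.
  unfold conj_twist; rewrite mapply_madj_l, twist_opp_twist by (auto; lra).
  apply mapply_madj_r, M_det.
Qed.

Lemma conj_twist_area_pres_diffeo t :
  C1_area_pres_diffeo (conj_twist M k r t) (conj_twist_deriv M k r t).
Proof.
  split; [apply conj_twist_C1|split].
  - exists (conj_twist M k r (- t)); split; [apply conj_twist_opp|split].
    + intros w; rewrite <- (Ropp_involutive t) at 1; apply conj_twist_opp.
    + eexists; apply conj_twist_C1.
  - intros z; unfold conj_twist_deriv.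
    rewrite !mdet_mmul, mdet_twist_deriv, mdet_madj, M_det by lra.
    rewrite !Rmult_1_l; apply Rabs_R1.
Qed.

Lemma vnorm_madj_conj_twist t z :
  vnorm (mapply (madj M) (conj_twist M k r t z)) = vnorm (mapply (madj M) z).
Proof. unfold conj_twist; rewrite mapply_madj_l by exact M_det; apply vnorm_twist. Qed.

Lemma conj_twist_outside t z : r <= vnorm (mapply (madj M) z) -> conj_twist M k r t z = z.
Proof.
  intros Hz; unfold conj_twist; rewrite twist_outside by (auto; lra).
  apply mapply_madj_r, M_det.
Qed.

Lemma conj_twist_inside t z : vnorm (mapply (madj M) z) <= sqrt k * r ->
  conj_twist M k r t z = mapply (mmul M (mmul (rotm t) (madj M))) z.
Proof.
  intros Hz; unfold conj_twist; rewrite twist_inside by (auto; lra).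
  rewrite !mapply_mmul; reflexivity.
Qed.

Lemma opnorm_conj_twist_deriv_sub_mI_le E t z : opnorm M <= E ->
  opnorm (msub (conj_twist_deriv M k r t z) mI) <= 864 * E ^ 2 / (1 - k) * Rabs t.
Proof.
  intros HE; pose proof (mnorm1_le_opnorm M); pose proof (mnorm1_ge0 M).
  pose proof (mnorm1_ge0 (msub (twist_deriv k r t (mapply (madj M) z)) mI)).
  pose proof (mnorm1_twist_deriv_sub_mI k r ltac:(lra) ltac:(lra) t (mapply (madj M) z)).
  eapply Rle_trans; [apply opnorm_le_mnorm1|]; unfold conj_twist_deriv.
  eapply Rle_trans; [apply mnorm1_conj_sub_mI_le, mmul_madj_r, M_det|]; rewrite mnorm1_madj.
  apply Rle_trans with (4 * E * (54 * Rabs t / (1 - k)) * (4 * E));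
    [apply Rmult3_le_compat; lra | right; field; lra].
Qed.

End ConjTwist.

(** * Ellipses *)

Lemma ellipse_iff (M : mat2) r (B : pt -> Prop) : mdet M = 1 ->
  (forall z, B z <-> image (mapply M) (fun w => vnorm w <= r) z) ->
  forall z, B z <-> vnorm (mapply (madj M) z) <= r.
Proof.
  intros HM HB z; rewrite HB; split.
  - intros [w [Hw <-]]; rewrite mapply_madj_l; auto.
  - intros Hz; exists (mapply (madj M) z); split; [exact Hz | apply mapply_madj_r, HM].
Qed.

Section Ellipse.

Variables (M : mat2) (k r : R) (B : pt -> Prop).
Hypothesis M_det : mdet M = 1.
Hypothesis k_bounds : 0 < k < 1.
Hypothesis r_pos : 0 < r.
Hypothesis B_iff : forall z, B z <-> vnorm (mapply (madj M) z) <= r.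

Lemma dilate_ellipse_iff s w : 0 < s -> dilate s B w <-> vnorm (mapply (madj M) w) <= s * r.
Proof.
  intros Hs; unfold dilate, image; split.
  - intros [z [Hz <-]]; rewrite mapply_pscale, vnorm_scale, Rabs_pos_eq by lra.
    apply Rmult_le_compat_l; [lra | apply B_iff, Hz].
  - intros Hw; exists (pscale (/ s) w); split.
    + apply B_iff; rewrite mapply_pscale, vnorm_scale, Rabs_pos_eq
        by (left; apply Rinv_0_lt_compat, Hs).
      apply Rmult_le_reg_l with s; [exact Hs|].
      rewrite <- Rmult_assoc, Rinv_r, Rmult_1_l by lra; exact Hw.
    + destruct w; unfold pscale; simpl; f_equal; field; lra.
Qed.

Lemma ellipse_dist_le_diameter x y : B x -> B y -> vnorm (psub x y) <= diameter B.
Proof.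
  assert (Hbnd : forall z, B z -> vnorm1 z <= 2 * (mnorm1 M * r)).
  { intros z Hz; rewrite <- (mapply_madj_r M z M_det).
    pose proof (vnorm_mapply_le M (mapply (madj M) z)); pose proof (mnorm1_ge0 M).
    pose proof (Rabs_fst_le_vnorm (mapply M (mapply (madj M) z))).
    pose proof (Rabs_snd_le_vnorm (mapply M (mapply (madj M) z))).
    apply B_iff in Hz; unfold vnorm1; nra. }
  intros Hx Hy; unfold diameter.
  apply (Lub_Rbar_real_spec _ (vnorm (psub x y)) (4 * (mnorm1 M * r))); [eauto| |eauto].
  intros s [x' [y' [Hx' [Hy' ->]]]].
  eapply Rle_trans; [apply vnorm_le_vnorm1|]; unfold vnorm1, psub; cbn [fst snd].
  pose proof (Rabs_triang (fst x') (- fst y')); pose proof (Rabs_triang (snd x') (- snd y')).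
  pose proof (Hbnd _ Hx'); pose proof (Hbnd _ Hy'); unfold vnorm1 in *.
  rewrite Rabs_Ropp in *; unfold Rminus; lra.
Qed.

Lemma ellipse_invariant_disk L : (forall w, image (mapply L) B w <-> B w) ->
  forall u, vnorm u <= r -> vnorm (mapply (mmul (madj M) (mmul L M)) u) <= r.
Proof.
  intros HL u Hu; rewrite !mapply_mmul; apply B_iff, HL.
  exists (mapply M u); split; [apply B_iff; rewrite mapply_madj_l; auto | reflexivity].
Qed.

Lemma ellipse_invariant_rotation L : mdet L = 1 ->
  (forall w, image (mapply L) B w <-> B w) ->
  mnorm1 (msub (mmul (madj M) (mmul L M)) mI) <= 1 / 2 ->
  exists t, Rabs t <= mnorm1 (msub (mmul (madj M) (mmul L M)) mI)
            /\ mmul (madj M) (mmul L M) = rotm t.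
Proof.
  intros HL HLB; apply rotm_of_disk_invariant with r;
    [exact r_pos | | apply ellipse_invariant_disk, HLB].
  rewrite !mdet_mmul, mdet_madj, M_det, HL; ring.
Qed.

Lemma conj_twist_fixes_outside t z : ~ B z -> conj_twist M k r t z = z.
Proof.
  intros Hz; apply conj_twist_outside; auto.
  destruct (Rle_or_lt r (vnorm (mapply (madj M) z))) as [H | H]; [exact H|].
  exfalso; apply Hz, B_iff; lra.
Qed.

Lemma conj_twist_inner t z : dilate (sqrt k) B z ->
  conj_twist M k r t z = mapply (mmul M (mmul (rotm t) (madj M))) z.
Proof.
  intros Hz; apply conj_twist_inside; auto.
  apply dilate_ellipse_iff; [apply sqrt_lt_R0; lra | exact Hz].
Qed.

Lemma conj_twist_preserves_dilate t s : 0 < s ->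
  forall w, image (conj_twist M k r t) (dilate s B) w <-> dilate s B w.
Proof.
  intros Hs w; rewrite !dilate_ellipse_iff by exact Hs; split.
  - intros [z [Hz <-]]; rewrite vnorm_madj_conj_twist by auto.
    apply dilate_ellipse_iff; auto.
  - intros Hw; exists (conj_twist M k r (- t) w); split.
    + apply dilate_ellipse_iff; [exact Hs|]; rewrite vnorm_madj_conj_twist; auto.
    + rewrite <- (Ropp_involutive t) at 1; apply conj_twist_opp; auto.
Qed.

Lemma conj_twist_displacement_le t z : vnorm (psub (conj_twist M k r t z) z) <= diameter B.
Proof.
  destruct (classic (B z)) as [Hz | Hz].
  - apply ellipse_dist_le_diameter; [|exact Hz].
    apply B_iff; rewrite vnorm_madj_conj_twist by auto; apply B_iff, Hz.
  - rewrite conj_twist_fixes_outside by exact Hz.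
    replace (psub z z) with (psub (0, 0) (0, 0)) by (unfold psub; simpl; f_equal; ring).
    assert (H0 : B (0, 0))
      by (apply B_iff; unfold mapply; simpl; rewrite !Rmult_0_r, Rplus_0_r, vnorm_zero; lra).
    apply ellipse_dist_le_diameter; exact H0.
Qed.

End Ellipse.

Theorem mainTheorem11 :
  forall (eps1 k E : R), 0 < eps1 -> 0 < k < 1 -> 1 <= E ->
  exists eps, 0 < eps /\
  forall (B : pt -> Prop) (L : mat2),
    (exists e, e <= E /\ centered_ellipse_ecc B e) ->
    diameter B <= eps1 ->
    mdet L = 1 ->
    opnorm (msub L mI) < eps ->
    (forall w, image (mapply L) B w <-> B w) ->
    exists (h : pt -> pt) (Dh : pt -> mat2),
      C1_area_pres_diffeo h Dh /\
      (* (i) *)   (forall z, ~ B z -> h z = z) /\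
      (* (ii) *)  (forall z, dilate (sqrt k) B z -> h z = mapply L z) /\
      (* (iii) *) (forall t, 0 < t -> forall w,
                      image h (dilate t B) w <-> dilate t B w) /\
      (* (iv) *)  (forall z, vnorm (psub (h z) z) <= eps1) /\
      (* (v) *)   (forall z, opnorm (msub (Dh z) mI) <= eps1).
Proof.
  intros eps1 k E Heps1 Hk HE.
  assert (Hc : 0 < 864 * E ^ 2 / (1 - k)) by (apply Rdiv_lt_0_compat; nra).
  (* [delta] bounds [|M^-1 L M - I|], hence the rotation parameter [t]. *)
  set (delta := Rmin (1 / 2) (eps1 / (864 * E ^ 2 / (1 - k)))).
  assert (Hdelta : 0 < delta <= 1 / 2)
    by (split; [apply Rmin_pos; [lra | apply Rdiv_lt_0_compat; lra] | apply Rmin_l]).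
  exists (delta / (64 * E ^ 2)); split; [apply Rdiv_lt_0_compat; nra|].
  intros B L [e [HeE [M [r [Hr [HdM [HoM HB]]]]]]] Hdiam HdL HLI HLB.
  pose proof (ellipse_iff M r B HdM HB) as HBN.
  assert (HP : mnorm1 (msub (mmul (madj M) (mmul L M)) mI) <= delta).
  { eapply Rle_trans; [apply (mnorm1_conj_sub_mI_le_opnorm M L E HdM); lra|].
    apply Rmult_le_of_le_div; nra. }
  destruct (ellipse_invariant_rotation M r B HdM Hr HBN L HdL HLB) as [t [Ht HPt]]; [lra|].
  exists (conj_twist M k r t), (conj_twist_deriv M k r t).
  split; [apply conj_twist_area_pres_diffeo; auto|split; [|split; [|split; [|split]]]].
  - apply (conj_twist_fixes_outside M k r B); auto.
  - intros z Hz; rewrite (conj_twist_inner M k r B), <- HPt by auto.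
    rewrite !mapply_mmul, !mapply_madj_r by exact HdM; reflexivity.
  - apply (conj_twist_preserves_dilate M k r B); auto.
  - intros z; eapply Rle_trans; [apply (conj_twist_displacement_le M k r B)|]; auto.
  - intros z; eapply Rle_trans; [apply opnorm_conj_twist_deriv_sub_mI_le with (E := E); auto; lra|].
    apply Rmult_le_of_le_div; [exact Hc|].
    apply Rle_trans with delta; [lra | apply Rmin_r].
Qed.
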